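(* Let $\mathbb{F}\in\{\mathbb{R},\mathbb{C}\}$, let $\{\varphi_i\}_{i=1}^M$ be a Parseval frame for $\mathbb{F}^N$, and let $0<k\leq N$. Assume that all $k$-element subsets of the frame span parallelotopes of the same $k$-dimensional volume, i.e. $v_k(\Phi_K)$ is the same for all $K\subseteq[M]$ with $|K|=k$. Then all $(k-1)$-element subsets also span parallelotopes of the same $(k-1)$-dimensional volume, i.e. $v_{k-1}(\Phi_J)$ is the same for all $J\subseteq[M]$ with $|J|=k-1$.
   Context: A Parseval frame for $\mathbb{F}^N$ is a family $\{\varphi_i\}_{i=1}^M\subseteq\mathbb{F}^N$ whose $N\times M$ matrix $\Phi$ (columns $\varphi_i$) satisfies $\Phi\Phi^*=I$. For $K\subseteq[M]$, $\Phi_K$ is the submatrix of columns indexed by $K$, and for an $N\times m$ matrix $F$ with $m\le N$, $v_m(F)=\sqrt{\det(F^*F)}$ (with $v_0=1$). *)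

From HB Require Import structures.
From mathcomp Require Import all_boot all_order all_algebra.
Set Implicit Arguments. Unset Strict Implicit. Unset Printing Implicit Defensive.
Import Order.TTheory GRing.Theory Num.Theory.
Local Open Scope ring_scope.

(* Phi_K : the N x |K| submatrix of the columns of Phi indexed by K
   (columns taken in increasing order of their index). *)
Definition subcols (T : Type) (N M : nat) (Phi : 'M[T]_(N, M)) (K : {set 'I_M})
  : 'M[T]_(N, #|K|) := colsub (@enum_val _ (mem K)) Phi.

(* Real case F = R (any real closed field): adjoint = transpose. *)
Definition parsevalR (R : rcfType) (N M : nat) (Phi : 'M[R]_(N, M)) : Prop :=
  Phi *m Phi^T = 1%:M.
Definition volR (R : rcfType) (N m : nat) (F : 'M[R]_(N, m)) : R :=
  Num.sqrt (\det (F^T *m F)).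

(* Complex case F = C (any numeric algebraically closed field):
   adjoint = conjugate transpose. *)
Definition adjmx (C : numClosedFieldType) (m n : nat) (A : 'M[C]_(m, n))
  : 'M[C]_(n, m) := map_mx Num.conj A^T.
Definition parsevalC (C : numClosedFieldType) (N M : nat) (Phi : 'M[C]_(N, M))
  : Prop := Phi *m adjmx Phi = 1%:M.
Definition volC (C : numClosedFieldType) (N m : nat) (F : 'M[C]_(N, m)) : C :=
  sqrtC (\det (adjmx F *m F)).

From HB Require Import structures.
From mathcomp Require Import all_boot all_order all_algebra all_fingroup.
Import Order.TTheory GRing.Theory Num.Theory.
Set Implicit Arguments. Unset Strict Implicit. Unset Printing Implicit Defensive.
Local Open Scope ring_scope.

(* Let g(F) = det(F^* F) be the Gram determinant of the columns of F and P_F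
   the orthogonal projection onto the orthogonal complement of their span.
   Block elimination gives g([v F]) = |P_F v|^2 g(F), and for a Parseval frame
   sum_i |P_F phi_i|^2 = tr (P_F Phi Phi^* P_F) = tr P_F = N - m.  Hence for
   |J| = m,  (N - m) g(Phi_J) = sum_{i notin J} g(Phi_{J + i}),  and if all
   (m+1)-subsets have the same Gram determinant the right-hand side depends only
   on m; since m < N the factor N - m can be cancelled.  Both the real and the
   complex case are instances of a field with a positive involution s. *)

Lemma imset_enum_val (T : finType) (K : {set T}) :
  [set @enum_val _ (mem K) x | x in 'I_#|K|] = K.
Proof.
apply/setP => y; apply/imsetP/idP => [[x _ ->]|Ky]; first exact: enum_valP.
by exists (enum_rank_in Ky y); rewrite ?enum_rankK_in.
Qed.

Section IndexInsertion.

Variables (M : nat) (J : {set 'I_M}) (i : 'I_M).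

Definition cons_index (r : 'I_(1 + #|J|)) : 'I_M :=
  if split r is inr r' then @enum_val _ (mem J) r' else i.

Lemma cons_index_lshift : cons_index (lshift #|J| ord0) = i.
Proof. by rewrite /cons_index -[lshift _ _]/(unsplit (inl _)) unsplitK. Qed.

Lemma cons_index_rshift r : cons_index (rshift 1 r) = @enum_val _ (mem J) r.
Proof. by rewrite /cons_index -[rshift _ _]/(unsplit (inr _)) unsplitK. Qed.

Lemma imset_cons_index : [set cons_index r | r in 'I_(1 + #|J|)] = i |: J.
Proof.
apply/setP => y; rewrite in_setU1; apply/imsetP/idP => [[r _ ->]|].
  rewrite /cons_index; case: (split r) => [_|r'].
    by rewrite eqxx.
  by rewrite enum_valP orbT.
case/orP => [/eqP ->|Jy].
  by exists (lshift #|J| ord0); rewrite ?cons_index_lshift.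
by exists (rshift 1 (enum_rank_in Jy y));
  rewrite ?cons_index_rshift ?enum_rankK_in.
Qed.

Lemma cons_index_inj : i \notin J -> injective cons_index.
Proof.
move=> iJ r r'; rewrite /cons_index.
case: splitP => [a ra|a ra]; case: splitP => [b rb|b rb].
- by move=> _; apply/val_inj; rewrite /= ra rb (ord1 a) (ord1 b).
- by move=> e; move: iJ; rewrite e enum_valP.
- by move=> e; move: iJ; rewrite -e enum_valP.
- by move/enum_val_inj => e; apply/val_inj; rewrite /= ra rb e.
Qed.

Lemma row_mx_col_subcols (T : Type) N (Phi : 'M[T]_(N, M)) :
  row_mx (col i Phi) (subcols Phi J) = colsub cons_index Phi.
Proof.
apply/matrixP => a b; rewrite /cons_index !mxE.
by case: (split b) => c; rewrite !mxE.
Qed.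

End IndexInsertion.

Lemma sum_setU1_card_const (V : nmodType) M m (f : {set 'I_M} -> V) :
  (forall K K' : {set 'I_M}, #|K| = m.+1 -> #|K'| = m.+1 -> f K = f K') ->
  forall J J' : {set 'I_M}, #|J| = m -> #|J'| = m ->
  \sum_(i | i \notin J) f (i |: J) = \sum_(i | i \notin J') f (i |: J').
Proof.
move=> f_const J J' cardJ cardJ'.
have cardU1 (L : {set 'I_M}) i : #|L| = m -> i \notin L -> #|i |: L| = m.+1.
  by move=> <- iL; rewrite cardsU1 iL.
case: (pickP (fun K : {set 'I_M} => #|K| == m.+1)) => [K0 /eqP cardK0 | noK].
  have sumE (L : {set 'I_M}) :
      #|L| = m -> \sum_(i | i \notin L) f (i |: L) = f K0 *+ (M - m).
    move=> cardL; have cardC : #|~: L| = (M - m)%N.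
      by rewrite cardsCs setCK card_ord cardL.
    rewrite -cardC -sumr_const.
    apply: eq_big => [i|i iL]; first by rewrite in_setC.
    exact: f_const (cardU1 _ _ cardL iL) cardK0.
  by rewrite !sumE.
have noU1 (L : {set 'I_M}) i : #|L| = m -> i \notin L -> f (i |: L) = 0.
  by move=> cardL iL; have := noK (i |: L); rewrite cardU1 ?eqxx.
by rewrite !big1 // => i; apply: noU1.
Qed.

Section GramDeterminant.

Variables (R : numFieldType) (s : {rmorphism R -> R}).
Hypothesis sK : involutive s.
Hypothesis s_mul_gt0 : forall y, y != 0 -> 0 < s y * y.

Definition adj m n (X : 'M[R]_(m, n)) : 'M[R]_(n, m) := map_mx s X^T.
Definition normsq n (y : 'cV[R]_n) : R := (adj y *m y) 0 0.
Definition gram_det n m (F : 'M[R]_(n, m)) : R := \det (adj F *m F).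
Definition coproj n m (F : 'M[R]_(n, m)) : 'M[R]_n :=
  1%:M - F *m invmx (adj F *m F) *m adj F.

Lemma adjM m n p (X : 'M[R]_(m, n)) (Y : 'M[R]_(n, p)) :
  adj (X *m Y) = adj Y *m adj X.
Proof. by rewrite /adj trmx_mul map_mxM. Qed.

Lemma adjK m n : cancel (@adj m n) (@adj n m).
Proof. by move=> X; apply/matrixP => i j; rewrite !mxE sK. Qed.

Lemma adj0 m n : adj (0 : 'M[R]_(m, n)) = 0.
Proof. by rewrite /adj trmx0 map_mx0. Qed.

Lemma adj1 n : adj (1%:M : 'M[R]_n) = 1%:M.
Proof. by rewrite /adj trmx1 map_mx1. Qed.

Lemma adjB m n (X Y : 'M[R]_(m, n)) : adj (X - Y) = adj X - adj Y.
Proof. by rewrite /adj linearB map_mxB. Qed.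

Lemma adj_row_mx m n1 n2 (X : 'M[R]_(m, n1)) (Y : 'M[R]_(m, n2)) :
  adj (row_mx X Y) = col_mx (adj X) (adj Y).
Proof. by rewrite /adj tr_row_mx map_col_mx. Qed.

Lemma det_adj n (X : 'M[R]_n) : \det (adj X) = s (\det X).
Proof. by rewrite det_map_mx det_tr. Qed.

Lemma s_mul_ge0 y : 0 <= s y * y.
Proof. by have [->|/s_mul_gt0/ltW //] := eqVneq y 0; rewrite rmorph0 mul0r. Qed.

Lemma normsqE n (y : 'cV[R]_n) : normsq y = \sum_r s (y r 0) * y r 0.
Proof. by rewrite /normsq !mxE; apply: eq_bigr => r _; rewrite !mxE. Qed.

Lemma normsq_ge0 n (y : 'cV[R]_n) : 0 <= normsq y.
Proof. by rewrite normsqE sumr_ge0 // => r _; apply: s_mul_ge0. Qed.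

Lemma normsq_eq0 n (y : 'cV[R]_n) : normsq y = 0 -> y = 0.
Proof.
rewrite normsqE => /psumr_eq0P y0; apply/matrixP => r c; rewrite (ord1 c) mxE.
apply: contra_eq (y0 (fun r _ => s_mul_ge0 _) r isT) => /s_mul_gt0.
by rewrite lt0r => /andP[].
Qed.

Lemma sum_normsq_col n p (X : 'M[R]_(n, p)) :
  \sum_i normsq (col i X) = \tr (adj X *m X).
Proof.
rewrite /mxtrace; apply: eq_bigr => i _; rewrite /normsq !mxE.
by apply: eq_bigr => r _; rewrite !mxE.
Qed.

Lemma mulmx_gram_eq0 n m (F : 'M[R]_(n, m)) (x : 'cV[R]_m) :
  adj F *m F *m x = 0 -> F *m x = 0.
Proof.
move=> Fx; apply: normsq_eq0.
by rewrite /normsq adjM -mulmxA (mulmxA (adj F)) Fx mulmx0 mxE.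
Qed.

Lemma gram_det_row_mx_eq0 n m (F : 'M[R]_(n, m)) (v : 'cV[R]_n) :
  gram_det F = 0 -> gram_det (row_mx v F) = 0.
Proof.
move/eqP; rewrite /gram_det -det_tr => /det0P[u u0 uA].
have Fu : F *m u^T = 0.
  by apply: mulmx_gram_eq0; rewrite -[_ *m F]trmxK -trmx_mul uA trmx0.
apply/eqP; rewrite -det_tr; apply/det0P; exists (row_mx 0 u).
  by apply: contraNneq u0; rewrite -row_mx0 => /eq_row_mx[_ ->].
rewrite -[row_mx 0 u]trmxK -trmx_mul -mulmxA tr_row_mx trmx0 mul_row_col.
by rewrite mulmx0 add0r Fu mulmx0 trmx0.
Qed.

Lemma gram_det_row_mx n m (F : 'M[R]_(n, m)) (v : 'cV[R]_n) :
  gram_det F != 0 ->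
  gram_det (row_mx v F) = normsq (coproj F *m v) * gram_det F.
Proof.
move=> F0; have Fu : adj F *m F \in unitmx by rewrite unitmxE unitfE.
set x := invmx (adj F *m F) *m (adj F *m v).
have -> : coproj F *m v = v - F *m x by rewrite mulmxBl mul1mx -!mulmxA.
set w := v - F *m x.
have vF : row_mx v F = row_mx w F *m block_mx 1%:M 0 x 1%:M.
  by rewrite mul_row_block !mulmx1 mulmx0 subrK add0r.
have Fw : adj F *m w = 0 by rewrite mulmxBr mulmxA mulKVmx // subrr.
have wF : adj w *m F = 0 by rewrite -[F]adjK -adjM Fw adj0.
rewrite /gram_det vF adjM -mulmxA det_mulmx mulmxA det_mulmx.
rewrite adj_row_mx mul_col_row Fw wF det_ublock det_mx11 det_lblock !det1 mulr1.
by rewrite det_adj det_lblock !det1 mulr1 rmorph1 mul1r mulr1.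
Qed.

Lemma gram_det_ge0 n m (F : 'M[R]_(n, m)) : 0 <= gram_det F.
Proof.
elim: m F => [|m IHm] F; first by rewrite /gram_det det_mx00.
have -> : F = row_mx (lsubmx (F : 'M_(n, 1 + m))) (rsubmx (F : 'M_(n, 1 + m))).
  by rewrite hsubmxK.
set F' := rsubmx _.
have [F'0|F'0] := eqVneq (gram_det F') 0; first by rewrite gram_det_row_mx_eq0.
by rewrite gram_det_row_mx // mulr_ge0 ?normsq_ge0.
Qed.

Lemma adj_coproj n m (F : 'M[R]_(n, m)) : adj (coproj F) = coproj F.
Proof.
rewrite /coproj adjB adj1 !adjM adjK mulmxA; congr (_ - _ *m _ *m _).
by rewrite {1}/adj trmx_inv map_invmx -/(adj _) adjM adjK.
Qed.

Lemma coproj_idem n m (F : 'M[R]_(n, m)) :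
  gram_det F != 0 -> coproj F *m coproj F = coproj F.
Proof.
move=> F0; have Fu : adj F *m F \in unitmx by rewrite unitmxE unitfE.
set Q := F *m invmx (adj F *m F) *m adj F.
have QQ : Q *m Q = Q.
  rewrite /Q -!mulmxA; congr (_ *m _).
  by rewrite !mulmxA -(mulmxA (invmx _)) mulVmx ?mul1mx.
by rewrite /coproj -/Q mulmxBl mul1mx mulmxBr mulmx1 QQ subrr subr0.
Qed.

Lemma mxtrace_coproj n m (F : 'M[R]_(n, m)) :
  gram_det F != 0 -> \tr (coproj F) = n%:R - m%:R.
Proof.
move=> F0; have Fu : adj F *m F \in unitmx by rewrite unitmxE unitfE.
by rewrite linearB /= mxtrace1 -mulmxA mxtrace_mulC -mulmxA mulVmx ?mxtrace1.
Qed.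

Lemma sum_gram_det_row_mx N M (Phi : 'M[R]_(N, M)) m (F : 'M[R]_(N, m)) :
  Phi *m adj Phi = 1%:M ->
  \sum_i gram_det (row_mx (col i Phi) F) = (N%:R - m%:R) * gram_det F.
Proof.
move=> Parseval; have [F0|F0] := eqVneq (gram_det F) 0.
  by rewrite F0 mulr0 big1 // => i _; apply: gram_det_row_mx_eq0.
under eq_bigr => i _ do rewrite gram_det_row_mx // colE mulmxA -colE.
rewrite -big_distrl /= sum_normsq_col mxtrace_mulC adjM adj_coproj mulmxA.
by rewrite -(mulmxA _ Phi) Parseval mulmx1 coproj_idem // mxtrace_coproj.
Qed.

Lemma gram_det_mulmx_perm n m (X : 'M[R]_(n, m)) (p : 'S_m) :
  gram_det (X *m perm_mx p) = gram_det X.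
Proof.
rewrite /gram_det adjM -mulmxA det_mulmx mulmxA det_mulmx det_adj det_perm.
by rewrite rmorph_sign mulrCA -signr_addb addbb expr0 mulr1.
Qed.

Lemma gram_det_colsub_eq0 N M (Phi : 'M[R]_(N, M)) n (f : 'I_n -> 'I_M) x y :
  x != y -> f x = f y -> gram_det (colsub f Phi) = 0.
Proof.
move=> xy fxy; rewrite /gram_det -det_tr.
apply: (determinant_alternate xy) => j; rewrite !mxE.
by apply: eq_bigr => r _; rewrite !mxE fxy.
Qed.

Lemma gram_det_colsub_imset N M (Phi : 'M[R]_(N, M)) n n'
    (f : 'I_n -> 'I_M) (g : 'I_n' -> 'I_M) :
  injective f -> injective g ->
  [set f x | x in 'I_n] = [set g x | x in 'I_n'] ->
  gram_det (colsub f Phi) = gram_det (colsub g Phi).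
Proof.
move=> f_inj g_inj fg.
have n'n : n' = n.
  have := congr1 (fun A : {set 'I_M} => #|A|) fg.
  by rewrite /= !card_imset // !card_ord.
subst n'.
pose h x := odflt x [pick y | f y == g x].
have fh x : f (h x) = g x.
  rewrite /h; case: pickP => [y /eqP //|none] /=.
  have : g x \in [set f y | y in 'I_n] by rewrite fg imset_f.
  by case/imsetP => y _ gxfy; have := none y; rewrite gxfy eqxx.
have h_inj : injective h by move=> x y hxy; apply: g_inj; rewrite -!fh hxy.
have -> : colsub g Phi = col_perm (perm h_inj) (colsub f Phi).
  by apply/matrixP => r c; rewrite !mxE permE fh.
by rewrite col_permE gram_det_mulmx_perm.
Qed.

Lemma gram_det_row_mx_subcols N M (Phi : 'M[R]_(N, M)) (J : {set 'I_M}) i :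
  gram_det (row_mx (col i Phi) (subcols Phi J)) =
  if i \in J then 0 else gram_det (subcols Phi (i |: J)).
Proof.
rewrite row_mx_col_subcols; case: ifPn => iJ.
  apply: (@gram_det_colsub_eq0 _ _ _ _ _
            (lshift #|J| ord0) (rshift 1 (enum_rank_in iJ i))).
    by rewrite eq_lrshift.
  by rewrite cons_index_lshift cons_index_rshift enum_rankK_in.
apply: gram_det_colsub_imset; rewrite ?imset_cons_index ?imset_enum_val //.
  exact: cons_index_inj.
exact: enum_val_inj.
Qed.

Lemma gram_det_subcols_descent N M (Phi : 'M[R]_(N, M)) m :
  Phi *m adj Phi = 1%:M -> (m < N)%N ->
  (forall K K' : {set 'I_M}, #|K| = m.+1 -> #|K'| = m.+1 ->
     gram_det (subcols Phi K) = gram_det (subcols Phi K')) ->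
  forall J J' : {set 'I_M}, #|J| = m -> #|J'| = m ->
  gram_det (subcols Phi J) = gram_det (subcols Phi J').
Proof.
move=> Parseval mN gram_const J J' cardJ cardJ'.
have sumE (L : {set 'I_M}) : #|L| = m ->
    (N%:R - m%:R) * gram_det (subcols Phi L) =
    \sum_(i | i \notin L) gram_det (subcols Phi (i |: L)).
  move=> <-; rewrite -(sum_gram_det_row_mx _ Parseval) (bigID (mem L)) /=.
  rewrite big1 ?add0r.
    by apply: eq_bigr => i /negbTE iL; rewrite gram_det_row_mx_subcols iL.
  by move=> i iL; rewrite gram_det_row_mx_subcols iL.
have Nm : N%:R - m%:R != 0 :> R.
  by rewrite -natrB ?(ltnW mN) // pnatr_eq0 subn_eq0 -ltnNge.
apply: (mulfI Nm); rewrite !sumE //.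
exact: (@sum_setU1_card_const _ _ _ (fun L => gram_det (subcols Phi L))
          gram_const J J' cardJ cardJ').
Qed.

End GramDeterminant.

Lemma volR_descent (R : rcfType) N M k (Phi : 'M[R]_(N, M)) :
  parsevalR Phi -> (0 < k <= N)%N ->
  (forall K K' : {set 'I_M}, #|K| = k -> #|K'| = k ->
     volR (subcols Phi K) = volR (subcols Phi K')) ->
  forall J J' : {set 'I_M}, #|J| = k.-1 -> #|J'| = k.-1 ->
  volR (subcols Phi J) = volR (subcols Phi J').
Proof.
move=> Parseval /andP[k0 kN] vol_const J J' cardJ cardJ'.
rewrite -(prednK k0) in kN vol_const.
pose s : {rmorphism R -> R} := idfun.
have sK : involutive s by [].
have s_mul_gt0 y : y != 0 -> 0 < s y * y.
  by move=> y0; rewrite lt0r mulf_neq0 //= -expr2 sqr_ge0.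
have adjE m n (X : 'M[R]_(m, n)) : adj s X = X^T.
  by apply/matrixP => i j; rewrite !mxE.
have volE m (F : 'M[R]_(N, m)) : volR F = Num.sqrt (gram_det s F).
  by rewrite /volR /gram_det adjE.
rewrite !volE; congr Num.sqrt.
apply: (gram_det_subcols_descent sK s_mul_gt0 _ kN _ cardJ cardJ').
  by rewrite adjE.
move=> K K' cardK cardK'; apply/eqP.
rewrite -eqr_sqrt ?(gram_det_ge0 sK s_mul_gt0) //.
by rewrite -!volE (vol_const K K' cardK cardK').
Qed.

Lemma volC_descent (C : numClosedFieldType) N M k (Phi : 'M[C]_(N, M)) :
  parsevalC Phi -> (0 < k <= N)%N ->
  (forall K K' : {set 'I_M}, #|K| = k -> #|K'| = k ->
     volC (subcols Phi K) = volC (subcols Phi K')) ->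
  forall J J' : {set 'I_M}, #|J| = k.-1 -> #|J'| = k.-1 ->
  volC (subcols Phi J) = volC (subcols Phi J').
Proof.
move=> Parseval /andP[k0 kN] vol_const J J' cardJ cardJ'.
rewrite -(prednK k0) in kN vol_const.
pose s : {rmorphism C -> C} := Num.conj.
have sK : involutive s by exact: conjCK.
have s_mul_gt0 y : y != 0 -> 0 < s y * y by rewrite mulrC mul_conjC_gt0.
have volE m (F : 'M[C]_(N, m)) : volC F = sqrtC (gram_det s F) by [].
rewrite !volE; congr sqrtC.
apply: (gram_det_subcols_descent sK s_mul_gt0 Parseval kN _ cardJ cardJ').
move=> K K' cardK cardK'.
by rewrite -[LHS]sqrtCK -volE (vol_const K K' cardK cardK') volE sqrtCK.
Qed.

Theorem theorem9 :
  (forall (R : rcfType) (N M k : nat) (Phi : 'M[R]_(N, M)),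
     parsevalR Phi -> (0 < k <= N)%N ->
     (forall K K' : {set 'I_M}, #|K| = k -> #|K'| = k ->
        volR (subcols Phi K) = volR (subcols Phi K')) ->
     (forall J J' : {set 'I_M}, #|J| = k.-1 -> #|J'| = k.-1 ->
        volR (subcols Phi J) = volR (subcols Phi J')))
  /\
  (forall (C : numClosedFieldType) (N M k : nat) (Phi : 'M[C]_(N, M)),
     parsevalC Phi -> (0 < k <= N)%N ->
     (forall K K' : {set 'I_M}, #|K| = k -> #|K'| = k ->
        volC (subcols Phi K) = volC (subcols Phi K')) ->
     (forall J J' : {set 'I_M}, #|J| = k.-1 -> #|J'| = k.-1 ->
        volC (subcols Phi J) = volC (subcols Phi J'))).
Proof. by split; [exact: volR_descent | exact: volC_descent]. Qed.
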